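(* Let $X=\prod_{i\in I}X_i$ be a topological product and suppose that $Y$ is a subspace of $X$ that fills all countable subproducts in $X$ and satisfies one of the following conditions: (a) the space $X_J=\prod_{i\in J}X_i$ is pseudo-$\aleph_1$-compact for any countable set $J\subset I$; (b) $X_i$ is first-countable for each $i\in I$; (c) $X_i$ is separable for each $i\in I$. Then $Y$ is $C$-embedded in $X$.
   Context: For nonempty $J\subseteq I$, $\pi_J\colon X\to X_J$ is the projection. A set $Y\subseteq X$ fills countable subproducts of $X$ if $\pi_J(Y)=X_J$ for every countable nonempty $J\subseteq I$. A space is pseudo-$\aleph_1$-compact if every locally finite family of open sets in it is countable. $Y$ is $C$-embedded in $X$ if every continuous real-valued function on $Y$ extends to a continuous real-valued function on $X$. *)

From HB Require Import structures.
From mathcomp Require Import all_boot all_order all_algebra.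
From mathcomp Require Import all_classical all_reals all_analysis.

Unset Printing Implicit Defensive.

Import numFieldNormedType.Exports.
Local Open Scope classical_set_scope.

Definition Prod {I : Type} (X : I -> topologicalType) : topologicalType :=
  prod_topology X.

Definition subProd {I : Type} (X : I -> topologicalType) (J : set I)
  : topologicalType := prod_topology (fun j : set_type J => X (set_val j)).

Definition projJ {I : Type} (X : I -> topologicalType) (J : set I)
  (x : Prod X) : subProd X J := fun j : set_type J => x (set_val j).

Definition fills_countable_subproducts {I : Type} (X : I -> topologicalType)
  (Y : set (Prod X)) : Prop :=
  forall J : set I, J !=set0 -> countable J -> projJ X J @` Y = [set: subProd X J].

Definition locally_finite_family {T : topologicalType} (F : set (set T)) : Prop :=
  forall x : T, exists U : set T,
    nbhs x U /\ finite_set [set A | F A /\ A `&` U !=set0].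

Definition pseudo_aleph1_compact (T : topologicalType) : Prop :=
  forall F : set (set T), (forall A, F A -> open A) ->
    locally_finite_family F -> countable F.

Definition first_countable (T : topologicalType) : Prop :=
  forall x : T, exists B : set (set T),
    [/\ countable B, (forall b, B b -> nbhs x b) &
        (forall U, nbhs x U -> exists2 b, B b & b `<=` U)].

Definition separable (T : topologicalType) : Prop :=
  exists2 D : set T, countable D & dense D.

(* Y is C-embedded in X: every continuous real-valued function on the
   subspace Y (the type [set_type Y] with the subspace (initial)
   topology) extends to a continuous real-valued function on X. *)
Definition C_embedded (R : realType) {T : topologicalType} (Y : set T) : Prop :=
  forall f : set_type Y -> R, continuous f ->
    exists g : T -> R, continuous g /\ forall y : set_type Y, g (set_val y) = f y.

(* Continuity of f at a point y of Y is witnessed by boxes of finite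
   support, and since Y fills countable subproducts, two points of Y whose boxes
   meet have close values.  Closing a countable set of coordinates under the
   supports of such boxes shows that f is constant on the points of Y agreeing with
   a given x on a suitable countable set [fiber_supp x]; this defines the extension.
   Under (b) its continuity follows from the countable local bases of the factors.
   Under (a) and (c) f depends, up to 4/(k+1) and hence exactly, on countably many
   coordinates, which gives continuity: for (c) the meeting points are taken in
   countable dense sets; for (a) a family of pairs of points of Y with distant
   values and supports overlapping only inside a finite K is countable by
   pseudo-aleph_1-compactness of X_K, and the supports of maximal such families
   close off the countable set. *)

From mathcomp Require Import all_boot all_order all_algebra.
From mathcomp Require Import all_classical all_reals all_analysis.
From mathcomp Require Import lra.
Import numFieldNormedType.Exports.
Import Order.TTheory GRing.Theory Num.Theory.
Local Open Scope classical_set_scope.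
Local Open Scope ring_scope.

Lemma filter_bigI_finite {T J : Type} (F : set_system T) (S : set J) (P : J -> set T) :
  Filter F -> finite_set S -> (forall i, S i -> F (P i)) ->
  F (\bigcap_(i in S) P i).
Proof.
elim/Pchoice: J => J in S P *; move=> FF fS FP.
rewrite -(fset_setK fS); apply: filter_bigI => i.
by rewrite in_fset_set // => /set_mem; exact: FP.
Qed.

Lemma countableU {T : Type} {A B : set T} :
  countable A -> countable B -> countable (A `|` B).
Proof.
move=> cA cB; have -> : A `|` B = \bigcup_(b in [set: bool]) (if b then A else B).
  by apply/seteqP; split=> [x [] ?|x [[] _ ?]]; by [exists true|exists false|left|right].
by apply: bigcup_countable => [|[]].
Qed.

Lemma countable_image {T U : Type} (g : T -> U) (A : set T) :
  countable A -> countable (g @` A).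
Proof. exact: card_le_trans (card_image_le g A). Qed.

Lemma countable_closure {U : Type} {Phi : set U -> set U} {J0 : set U} :
  countable J0 -> (forall A, countable A -> countable (Phi A)) ->
  exists J, [/\ countable J, J0 `<=` J &
    forall K, finite_set K -> K `<=` J ->
      exists A, [/\ countable A, K `<=` A & Phi A `<=` J]].
Proof.
move=> cJ0 cPhi.
pose fix Jn n := if n is m.+1 then Jn m `|` Phi (Jn m) else J0.
have cJn n : countable (Jn n).
  by elim: n => [|n IH] //=; apply: countableU => //; exact: cPhi.
have Jn_mono n m : (n <= m)%N -> Jn n `<=` Jn m.
  elim: m => [|m IH]; first by rewrite leqn0 => /eqP ->.
  rewrite leq_eqVlt => /predU1P [-> //|/IH sub i /sub]; by left.
exists (\bigcup_n Jn n); split; first exact: bigcup_countable.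
  by move=> i J0i; exists 0%N.
move=> K fK KJ.
have [N _ KJN] : \forall n \near \oo, K `<=` Jn n.
  have : \forall n \near \oo, (\bigcap_(i in K) [set n | Jn n i]) n.
    apply: filter_bigI_finite => // i /KJ [N _ JNi].
    by exists N => // n /= /Jn_mono; apply.
  by apply: filterS => n KJn i /KJn.
exists (Jn N); split; [exact: cJn | exact: KJN N (leqnn N) | move=> i Phii].
by exists N.+1 => //=; right.
Qed.

Lemma is_subset1_finite {T : Type} (A : set T) : is_subset1 A -> finite_set A.
Proof.
move=> A1; have [->|/set0P [a Aa]] := eqVneq A set0; first exact: finite_set0.
by apply: (@sub_finite_set _ _ [set a]) (finite_set1 a) => b Ab; exact: A1.
Qed.

Lemma finite_preimage_val {T : Type} (K S : set T) :
  finite_set S -> finite_set [set j : K | S (val j)].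
Proof. by apply: finite_preimage => j j' _ _; exact: val_inj. Qed.

Section ProductBoxes.
Context {I : Type} {T : I -> topologicalType}.
Implicit Types (S : set I) (U : forall i, set (T i)) (p : prod_topology T).

Definition box S U : set (prod_topology T) := [set q | forall i, S i -> U i (q i)].

Lemma nbhs_proj p i (B : set (T i)) :
  nbhs (p i) B -> nbhs p [set q : prod_topology T | B (q i)].
Proof. exact: (@proj_continuous {classic I} T i p). Qed.

Lemma nbhs_box p S U :
  finite_set S -> (forall i, S i -> nbhs (p i) (U i)) -> nbhs p (box S U).
Proof. by move=> fS nU; apply: filter_bigI_finite => // i /nU /nbhs_proj. Qed.

Lemma open_box S U :
  finite_set S -> (forall i, S i -> open (U i)) -> open (box S U).
Proof.
move=> fS oU; rewrite openE => p Bp; apply: nbhs_box => // i Si.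
by apply: open_nbhs_nbhs; split; [exact: oU | exact: Bp].
Qed.

Let open_boxes p : set_system (prod_topology T) :=
  [set A | exists S U, [/\ finite_set S, forall i, open (U i) /\ U i (p i) &
                          box S U `<=` A]].

Let open_boxes_filter p : Filter (open_boxes p).
Proof.
split.
- exists set0, (fun=> setT); split => //.
  by move=> i; split => //; exact: openT.
- move=> A B [S [U [fS oU SA]]] [S' [U' [fS' oU' SB]]].
  exists (S `|` S'), (fun i => U i `&` U' i); split.
  + by rewrite finite_setU.
  + by move=> i; split; [apply: openI; [exact: (oU i).1|exact: (oU' i).1]|
                         split; [exact: (oU i).2|exact: (oU' i).2]].
  + by move=> q Bq; split; [apply: SA => i Si|apply: SB => i Si];
      have [] := Bq i; by [left|right|].
- by move=> A B AB [S [U [fS oU SA]]]; exists S, U; split => //; exact: subset_trans AB.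
Qed.

(* The open boxes around [p] form a filter converging to [p] in each of the
   initial topologies whose supremum is the product topology. *)
Lemma nbhs_open_box {p A} : nbhs p A ->
  exists S U, [/\ finite_set S, forall i, open (U i) /\ U i (p i) & box S U `<=` A].
Proof.
suff : open_boxes p --> p by apply.
have Fp := open_boxes_filter p.
apply/cvg_sup => i B /= [C [[D oD <-] Dp CB]].
pose U := @dfwith {classic I} (fun j => set (T j)) (fun=> setT) i D.
have Ui : U i = D by exact: dfwith_in.
exists [set i], U; split.
- exact: finite_set1.
- move=> j; rewrite /U.
  case: (@dfwithP {classic I} (fun j => set (T j)) (fun=> setT) i D j) => [|k _].
    by split.
  by split => //; exact: openT.
- by move=> q /(_ i erefl); rewrite Ui => Dq; exact: CB.
Qed.

Lemma box_meet {S U S' V} p q :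
  (forall i, S i -> U i (p i)) -> (forall i, S' i -> V i (q i)) ->
  (forall i, S i -> S' i -> U i `&` V i !=set0) -> box S U `&` box S' V !=set0.
Proof.
move=> Up Vq UV.
have coord i : exists x : T i, (S i -> U i x) /\ (S' i -> V i x).
  have [Si|nSi] := pselect (S i); have [S'i|nS'i] := pselect (S' i).
  - by have [x [Ux Vx]] := UV i Si S'i; exists x.
  - by exists (p i); split => [/Up|/nS'i].
  - by exists (q i); split => [/nSi|/Vq].
  - by exists (p i); split => [/nSi|/nS'i].
exists (fun i => projT1 (cid (coord i))); split => i Si;
  by case: (projT2 (cid (coord i))) => Ux Vx; by [apply: Ux | apply: Vx].
Qed.

Definition cylinder (Rs : set {i : I & set (T i)}) : set (prod_topology T) :=
  [set q | forall r, Rs r -> tagged r (q (tag r))].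

Lemma nbhs_cylinder {p Rs} : finite_set Rs ->
  (forall r, Rs r -> nbhs (p (tag r)) (tagged r)) -> nbhs p (cylinder Rs).
Proof. by move=> fRs nRs; apply: filter_bigI_finite => // r /nRs /nbhs_proj. Qed.

Lemma not_nbhs_cylinder_points p (G : set (prod_topology T)) : ~ nbhs p G ->
  forall Rs, exists t, finite_set Rs ->
    (forall r, Rs r -> nbhs (p (tag r)) (tagged r)) -> cylinder Rs t /\ ~ G t.
Proof.
move=> nG Rs.
have [[fRs nRs]|nRs] :=
  pselect (finite_set Rs /\ forall r, Rs r -> nbhs (p (tag r)) (tagged r)).
  have /existsNP [t /not_implyP RtG] : ~ cylinder Rs `<=` G.
    by move=> RsG; apply: nG; exact: filterS RsG (nbhs_cylinder fRs nRs).
  by exists t.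
by exists p => fRs nRs'; case: nRs.
Qed.

End ProductBoxes.

Lemma pseudo_aleph1_compact_cluster (T : topologicalType) (P : Type) (Pf : set P)
    (W : P -> set T) :
  pseudo_aleph1_compact T -> (forall p, Pf p -> open (W p) /\ W p !=set0) ->
  ~ countable Pf ->
  exists x : T, forall U, nbhs x U -> infinite_set [set p | Pf p /\ W p `&` U !=set0].
Proof.
move=> Tpa oW ncPf.
have [LF|/existsNP [x notLF]] := pselect (locally_finite_family (W @` Pf)); last first.
  exists x => U xU finU; apply: notLF; exists U; split => //.
  apply: sub_finite_set (finite_image W finU).
  by move=> _ [[p Pfp <-] WU]; exists p.
have cWPf : countable (W @` Pf).
  by apply: Tpa LF => _ [p Pfp <-]; exact: (oW p Pfp).1.
have [_ [p0 Pfp0 <-] infW] :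
    exists2 A, (W @` Pf) A & infinite_set [set p | Pf p /\ W p = A].
  apply: contrapT => /forall2NP finW; apply: ncPf.
  have -> : Pf = \bigcup_(A in W @` Pf) [set p | Pf p /\ W p = A].
    by apply/seteqP; split => [p Pfp|p [A _ []//]]; exists (W p) => //; exists p.
  apply: bigcup_countable => // A WA; apply: finite_set_countable.
  by have [//|/contrapT] := finW A.
have [x Wx] := (oW p0 Pfp0).2; exists x => U xU.
apply: sub_infinite_set infW => p [Pfp Wp]; split => //.
by exists x; split; [rewrite Wp | exact: nbhs_singleton].
Qed.

Lemma ltr_dist_through {R : numDomainType} (u a b e e' : R) :
  `|u - a| < e -> `|u - b| < e' -> `|a - b| < e + e'.
Proof.
move=> ua ub; apply: le_lt_trans (ler_distD u a b) _.
by rewrite distrC ltrD.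
Qed.

Section ContinuousExtension.
Context {R : realType} {I : Type} {X : I -> topologicalType} {Y : set (Prod X)}.
Hypothesis Y_fills : fills_countable_subproducts X Y.
Hypothesis Y_neq0 : Y !=set0.
Context {f : Y -> R}.
Hypothesis f_cont : continuous f.

Definition agree_on (J : set I) (p q : Prod X) := forall i, J i -> p i = q i.

Lemma fill_subProd {K : set I} (w : subProd X K) :
  countable K -> exists y : Y, projJ X K (val y) = w.
Proof.
move=> cK; have [K0|K0] := pselect (K !=set0).
  have : (projJ X K @` Y) w by rewrite Y_fills.
  by case=> p Yp <-; exists (SigSub (mem_set Yp)).
have [p Yp] := Y_neq0; exists (SigSub (mem_set Yp)).
apply: functional_extensionality_dep => j; exfalso; apply: K0.
by exists (val j); exact: set_valP.
Qed.

Lemma exists_fill (J : set I) (p : Prod X) :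
  exists y : Y, countable J -> agree_on J (val y) p.
Proof.
have [cJ|ncJ] := pselect (countable J); last first.
  by have [q Yq] := Y_neq0; exists (SigSub (mem_set Yq)) => /ncJ.
have [y yp] := fill_subProd (projJ X J p) cJ; exists y => _ i Ji.
exact: (congr1 (fun w : subProd X J => w (SigSub (mem_set Ji))) yp).
Qed.

(* An arbitrary point of [Y] when [J] is uncountable. *)
Definition fill (J : set I) (p : Prod X) : Y := projT1 (cid (exists_fill J p)).

Lemma fillP {J} p : countable J -> agree_on J (val (fill J p)) p.
Proof. exact: projT2 (cid (exists_fill J p)). Qed.

Lemma exists_osc_box (y : Y) {e : R} : 0 < e ->
  exists SU : set I * (forall i, set (X i)),
    [/\ finite_set SU.1, forall i, open (SU.2 i) /\ SU.2 i (val y i) &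
        forall u : Y, box SU.1 SU.2 (val u) -> `|f u - f y| < e].
Proof.
move=> e0; have /cvgrPdist_lt /(_ e e0) := f_cont y.
rewrite /nbhs /= => -[B [[W oW <-] Wy BA]].
have [S [U [fS oU SW]]] := nbhs_open_box (open_nbhs_nbhs (conj oW Wy)).
by exists (S, U); split => // u /SW Wu; rewrite distrC; exact: BA.
Qed.

Definition eps (k : nat) : R := k.+1%:R^-1.

Lemma eps_gt0 k : 0 < eps k.
Proof. by rewrite invr_gt0 ltr0n. Qed.

Lemma eq0_lt_eps (a : R) : (forall k, `|a| < eps k *+ 4) -> a = 0.
Proof.
move=> small; apply/eqP; apply: contraT => a0.
have a4 : 0 < `|a| / 4%:R by rewrite divr_gt0 // normr_gt0.
have [k] := ltr_add_invr a4.
rewrite add0r => ltk; have := small k; rewrite -/(eps k) in ltk; lra.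
Qed.

Definition osc_box k (y : Y) := projT1 (cid (exists_osc_box y (eps_gt0 k))).
Definition supp k y := (osc_box k y).1.
Definition nbd k y := (osc_box k y).2.

Lemma osc_boxP k y :
  [/\ finite_set (supp k y), forall i, open (nbd k y i) /\ nbd k y i (val y i) &
      forall u : Y, box (supp k y) (nbd k y) (val u) -> `|f u - f y| < eps k].
Proof. exact: projT2 (cid (exists_osc_box y (eps_gt0 k))). Qed.

Lemma supp_finite k y : finite_set (supp k y).
Proof. by case: (osc_boxP k y). Qed.

Lemma supp_countable k y : countable (supp k y).
Proof. exact/finite_set_countable/supp_finite. Qed.

Lemma nbd_open k y i : open (nbd k y i).
Proof. by case: (osc_boxP k y) => _ /(_ i) []. Qed.

Lemma nbd_mem k y i : nbd k y i (val y i).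
Proof. by case: (osc_boxP k y) => _ /(_ i) []. Qed.

Lemma osc_box_lt k y (u : Y) :
  box (supp k y) (nbd k y) (val u) -> `|f u - f y| < eps k.
Proof. by case: (osc_boxP k y) => _ _; apply. Qed.

Definition pair_supp k (P : Y * Y) := supp k P.1 `|` supp k P.2.

Lemma pair_supp_finite k P : finite_set (pair_supp k P).
Proof. by rewrite finite_setU; split; exact: supp_finite. Qed.

Definition boxes_meet k (a b : Y) :=
  forall i, supp k a i -> supp k b i -> nbd k a i `&` nbd k b i !=set0.

Lemma boxes_meet_mem k a b :
  (forall i, supp k a i -> supp k b i -> nbd k a i (val b i)) -> boxes_meet k a b.
Proof. by move=> ab i Sa Sb; exists (val b i); split; [exact: ab | exact: nbd_mem]. Qed.

Lemma boxes_meetC k a b : boxes_meet k a b -> boxes_meet k b a.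
Proof. by move=> ab i Sb Sa; rewrite setIC; exact: ab. Qed.

(* Filling a common point of the two boxes on their supports gives a point of [Y]
   lying in both. *)
Lemma dist_lt_boxes_meet k a b : boxes_meet k a b -> `|f a - f b| < eps k *+ 2.
Proof.
move=> ab.
have [p [pa pb]] :=
  box_meet (val a) (val b) (fun i _ => nbd_mem k a i) (fun i _ => nbd_mem k b i) ab.
have up := fillP p (countableU (supp_countable k a) (supp_countable k b)).
rewrite mulr2n; apply: (@ltr_dist_through _ (f (fill (supp k a `|` supp k b) p))).
- by apply: osc_box_lt => i Si; rewrite up; [exact: pa | left].
- by apply: osc_box_lt => i Si; rewrite up; [exact: pb | right].
Qed.

Lemma dist_lt_common_meet {k z a b} :
  boxes_meet k z a -> boxes_meet k z b -> `|f a - f b| < eps k *+ 4.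
Proof.
move=> /dist_lt_boxes_meet za /dist_lt_boxes_meet zb.
by rewrite (mulrnDr _ 2 2); exact: ltr_dist_through za zb.
Qed.

Definition osc_on (J : set I) (e : R) :=
  forall y y' : Y, agree_on J (val y) (val y') -> `|f y - f y'| < e.

Definition depends_on (J : set I) :=
  forall y y' : Y, agree_on J (val y) (val y') -> f y = f y'.

Lemma depends_on_bigcup :
  (forall k, exists J, countable J /\ osc_on J (eps k *+ 4)) ->
  exists2 J, countable J & depends_on J.
Proof.
move=> /choice [J JP]; exists (\bigcup_k J k).
  by apply: bigcup_countable => // k _; exact: (JP k).1.
move=> y y' yy'; apply/subr0_eq/eq0_lt_eps => k.
by apply: (JP k).2 => i Ji; apply: yy'; exists k.
Qed.

(* [J] contains the supports of the boxes of the points [fill A x]; such a point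
   agrees with [x], hence with any [y] agreeing with [x] on [J], on the common
   support, so their boxes meet. *)
Lemma exists_fiber_support (x : Prod X) :
  exists2 J, countable J &
    forall y y' : Y, agree_on J (val y) x -> agree_on J (val y') x -> f y = f y'.
Proof.
pose Phi A := \bigcup_k supp k (fill A x).
have cPhi A : countable A -> countable (Phi A).
  by move=> _; apply: bigcup_countable => // k _; exact: supp_countable.
have [J [cJ _ closedJ]] := countable_closure (countable0 I) cPhi.
exists J => // y y' yx y'x; apply/subr0_eq/eq0_lt_eps => k.
pose K := pair_supp k (y, y') `&` J.
have fK : finite_set K by exact/finite_setIl/pair_supp_finite.
have [A [cA KA PhiJ]] := closedJ K fK (fun i Ki => Ki.2).
have meet (a : Y) : agree_on J (val a) x -> supp k a `<=` pair_supp k (y, y') ->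
    boxes_meet k (fill A x) a.
  move=> ax sa; apply: boxes_meet_mem => i zi ai.
  have Ji : J i by apply: PhiJ; exists k.
  by rewrite (ax i Ji) -(fillP x cA i (KA i (conj (sa i ai) Ji))); exact: nbd_mem.
by apply: dist_lt_common_meet (meet y yx _) (meet y' y'x _) => i; [left|right].
Qed.

Definition fiber_supp (x : Prod X) : set I := s2val (cid2 (exists_fiber_support x)).

Lemma fiber_supp_countable x : countable (fiber_supp x).
Proof. exact: s2valP (cid2 (exists_fiber_support x)). Qed.

Lemma fiber_suppP x (y y' : Y) :
  agree_on (fiber_supp x) (val y) x -> agree_on (fiber_supp x) (val y') x -> f y = f y'.
Proof. exact: (s2valP' (cid2 (exists_fiber_support x)) y y'). Qed.

Definition extension (x : Prod X) : R := f (fill (fiber_supp x) x).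

Lemma extension_eq x (y : Y) : agree_on (fiber_supp x) (val y) x -> extension x = f y.
Proof. exact: fiber_suppP (fillP x (fiber_supp_countable x)). Qed.

Lemma extension_val (y : Y) : extension (val y) = f y.
Proof. exact: extension_eq. Qed.

Lemma extension_eq_depends {J} : countable J -> depends_on J ->
  forall x (y : Y), agree_on J (val y) x -> extension x = f y.
Proof.
move=> cJ dJ x y yx; have ux := fillP x (countableU cJ (fiber_supp_countable x)).
rewrite (@extension_eq x (fill (J `|` fiber_supp x) x)) => [|i Ji].
  by apply: dJ => i Ji; rewrite yx // ux //; left.
by apply: ux; right.
Qed.

Lemma continuous_extension_depends J : countable J -> depends_on J -> continuous extension.
Proof.
move=> cJ dJ x; apply/(@cvgrPdist_lt _ _ _ _ (@nbhs_filter (Prod X) x)) => e e0.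
have zx := fillP x cJ; set z := fill J x in zx.
have [[S U] /= [fS oU zU]] := exists_osc_box z e0.
rewrite (extension_eq_depends cJ dJ _ _ zx).
apply: (@filterS _ _ _ (box (S `&` J) U)); last first.
  apply: nbhs_box => [|i [Si Ji]]; first exact: finite_setIl.
  by rewrite -(zx i Ji); apply: open_nbhs_nbhs; exact: oU.
move=> t tU.
have [p [pt pU]] : box J (fun i => [set t i]) `&` box S U !=set0.
  apply: (box_meet t (val z)) => // [i _|i Ji Si]; first exact: (oU i).2.
  by exists (t i); split => //; exact: tU.
have up := fillP p (countableU cJ (finite_set_countable fS)).
rewrite (extension_eq_depends cJ dJ t (fill (J `|` S) p)); last first.
  by move=> i Ji; rewrite up; [exact: pt | left].
by rewrite distrC; apply: zU => i Si; rewrite up; [exact: pU | right].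
Qed.

Lemma exists_cylinder_point {Rs} : finite_set Rs -> cylinder Rs !=set0 ->
  exists y : Y, cylinder Rs (val y).
Proof.
move=> fRs [p Rp].
have cRs : countable (tag @` Rs) by apply/finite_set_countable/finite_image.
exists (fill (tag @` Rs) p) => r Rr.
by rewrite (fillP p cRs (tag r)); [exact: Rp | exists r].
Qed.

Lemma closure_cylinders k {Req : set I -> set {i : I & set (X i)}}
    (w : set {i : I & set (X i)} -> Y) {J0 : set I} :
  countable J0 -> (forall A, countable A -> countable (Req A)) ->
  exists J, [/\ countable J, J0 `<=` J &
    forall K, finite_set K -> K `<=` J -> exists2 A, K `<=` A &
      forall Rs, Rs `<=` Req A -> finite_set Rs -> supp k (w Rs) `<=` J].
Proof.
move=> cJ0 cReq.
pose Phi A := \bigcup_(Rs in [set Rs | Rs `<=` Req A /\ finite_set Rs]) supp k (w Rs).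
have cPhi A : countable A -> countable (Phi A).
  move=> cA; apply: bigcup_countable => [|Rs _]; last exact: supp_countable.
  exact: countable_finite_subset (cReq A cA).
have [J [cJ J0J closedJ]] := countable_closure cJ0 cPhi.
exists J; split => // K fK KJ; have [A [_ KA PhiJ]] := closedJ K fK KJ.
by exists A => // Rs RsA fRs i Si; apply: PhiJ; exists Rs.
Qed.

Lemma separable_osc : (forall i, separable (X i)) ->
  forall k, exists J, countable J /\ osc_on J (eps k *+ 4).
Proof.
move=> Xsep k; pose D i := s2val (cid2 (Xsep i)).
have dD i : dense (D i) := s2valP' (cid2 (Xsep i)).
pose Req A := \bigcup_(i in A) ((fun d => existT _ i [set d]) @` D i).
have cReq A : countable A -> countable (Req A).
  move=> cA; apply: bigcup_countable => // i _; apply: countable_image.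
  exact: s2valP (cid2 (Xsep i)).
have /choice [w wP] : forall Rs, exists y : Y,
    finite_set Rs -> cylinder Rs !=set0 -> cylinder Rs (val y).
  move=> Rs; have [[fRs Rs0]|nRs] := pselect (finite_set Rs /\ cylinder Rs !=set0).
    by have [y Ry] := exists_cylinder_point fRs Rs0; exists y.
  by have [q Yq] := Y_neq0; exists (SigSub (mem_set Yq)) => fRs Rs0; case: nRs.
have [J [cJ _ closedJ]] := closure_cylinders k w (countable0 I) cReq.
exists J; split => // y y' yy'.
pose K := pair_supp k (y, y') `&` J.
have fK : finite_set K by exact/finite_setIl/pair_supp_finite.
have [A KA wJ] := closedJ K fK (fun i Ki => Ki.2).
have dense_pt i : exists d : X i, K i -> (nbd k y i `&` nbd k y' i `&` D i) d.
  have [Ki|nKi] := pselect (K i); last by exists (val y i) => /nKi.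
  have [||d Wd] := dD i (nbd k y i `&` nbd k y' i); last by exists d.
  - by exists (val y i); split; [|rewrite yy'; [|exact: Ki.2]]; exact: nbd_mem.
  - by apply: openI; exact: nbd_open.
pose d i := projT1 (cid (dense_pt i)).
have dP i : K i -> (nbd k y i `&` nbd k y' i `&` D i) (d i) := projT2 (cid (dense_pt i)).
pose Rs := (fun i => existT _ i [set d i]) @` K.
have fRs : finite_set Rs by exact: finite_image.
have eRs : cylinder Rs (val (w Rs)) by apply: wP => //; exists d => _ [i _ <-].
have eJ : supp k (w Rs) `<=` J.
  apply: wJ => // _ [i Ki <-]; exists i; first exact: KA.
  by exists (d i) => //; case: (dP i Ki).
have meet (a : Y) : supp k a `<=` pair_supp k (y, y') ->
    (forall i, K i -> nbd k a i (d i)) -> boxes_meet k (w Rs) a.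
  move=> sa ad; apply/boxes_meetC/boxes_meet_mem => i ai ei.
  have Ki : K i by split; [exact: sa | exact: eJ].
  by rewrite (eRs (existT _ i [set d i])) /=; [exact: ad | exists i].
have [yd y'd] : (forall i, K i -> nbd k y i (d i)) /\ (forall i, K i -> nbd k y' i (d i)).
  by split => i /dP [[]].
by apply: dist_lt_common_meet (meet y _ yd) (meet y' _ y'd) => i; [left | right].
Qed.

Section FirstCountable.
Hypothesis X_fc : forall i, first_countable (X i).

(* Otherwise every finite cylinder of neighbourhoods of [x] contains a bad point.
   Closing [fiber_supp x] under the supports of points of [Y] that represent these
   bad points, the cylinder built from the local bases inside the box of
   [fill L x] has a bad point whose value is close to [extension x]. *)
Lemma extension_near (x : Prod X) k :
  \forall t \near x, `|extension x - extension t| < eps k *+ 2.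
Proof.
apply: contrapT => /not_nbhs_cylinder_points /choice [bad badP].
pose B i := projT1 (cid (X_fc i (x i))).
have BP i := projT2 (cid (X_fc i (x i))).
pose Req A := \bigcup_(i in A) ((fun b => existT _ i b) @` B i).
have cReq A : countable A -> countable (Req A).
  by move=> cA; apply: bigcup_countable => // i _; apply: countable_image; case: (BP i).
pose w Rs := fill (fiber_supp (bad Rs) `|` tag @` Rs) (bad Rs).
have [L [cL xL closedL]] := closure_cylinders k w (fiber_supp_countable x) cReq.
have zx := fillP x cL; set z := fill L x in zx.
pose K := supp k z `&` L.
have fK : finite_set K by exact/finite_setIl/supp_finite.
have [A KA wL] := closedL K fK (fun i Ki => Ki.2).
have base_pt i : exists b, K i -> B i b /\ b `<=` nbd k z i.
  have [Ki|nKi] := pselect (K i); last by exists setT => /nKi.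
  have : nbhs (x i) (nbd k z i).
    rewrite -(zx i Ki.2); apply: open_nbhs_nbhs.
    by split; [exact: nbd_open | exact: nbd_mem].
  by case: (BP i) => _ _ /[apply] -[b Bb bz]; exists b.
pose b i := projT1 (cid (base_pt i)).
have bP i : K i -> B i (b i) /\ b i `<=` nbd k z i := projT2 (cid (base_pt i)).
pose Rs := (fun i => existT _ i (b i)) @` K.
have fRs : finite_set Rs by exact: finite_image.
have RsA : Rs `<=` Req A.
  by move=> _ [i Ki <-]; exists i; [exact: KA | exists (b i) => //; exact: (bP i Ki).1].
have nRs r : Rs r -> nbhs (x (tag r)) (tagged r).
  by case=> i Ki <-; case: (BP i) => _ + _; apply; exact: (bP i Ki).1.
have [tRs] := badP Rs fRs nRs.
have wP := fillP (bad Rs) (countableU (fiber_supp_countable (bad Rs))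
  (finite_set_countable (finite_image tag fRs))).
apply; rewrite (@extension_eq x z) => [|i /xL]; last exact: zx.
rewrite (@extension_eq _ (w Rs)) => [|i fi]; last by apply: wP; left.
apply/dist_lt_boxes_meet/boxes_meet_mem => i zi wi.
have Ki : K i by split => //; exact: wL Rs RsA fRs i wi.
rewrite wP; last by right; exists (existT _ i (b i)) => //; exists i.
by apply: (bP i Ki).2; exact: (tRs (existT _ i (b i)) (ex_intro2 _ _ i Ki erefl)).
Qed.

Lemma continuous_extension_first_countable : continuous extension.
Proof.
move=> x; apply/(@cvgrPdist_lt _ _ _ _ (@nbhs_filter (Prod X) x)) => e e0.
have e2 : 0 < e / 2 by rewrite divr_gt0.
have [k] := ltr_add_invr e2; rewrite add0r -/(eps k) => ke.
by apply: filterS (extension_near x k) => t; lra.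
Qed.

End FirstCountable.

Section PseudoAleph1Compact.
Hypothesis X_pa : forall J : set I, countable J -> pseudo_aleph1_compact (subProd X J).

Definition bad_pair k (K : set I) (P : Y * Y) :=
  agree_on K (val P.1) (val P.2) /\ eps k *+ 4 <= `|f P.1 - f P.2|.

Definition separated k (K : set I) (Pf : set (Y * Y)) :=
  (forall P, Pf P -> bad_pair k K P) /\
  (forall P Q, Pf P -> Pf Q -> P <> Q -> pair_supp k P `&` pair_supp k Q `<=` K).

Definition window k (K : set I) (P : Y * Y) : set (subProd X K) :=
  box [set j : K | pair_supp k P (val j)]
      (fun j => nbd k P.1 (val j) `&` nbd k P.2 (val j)).

Lemma window_open k K P : open (window k K P).
Proof.
apply: open_box => [|j _]; last by apply: openI; exact: nbd_open.
exact/finite_preimage_val/pair_supp_finite.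
Qed.

Lemma window_proj k K P : bad_pair k K P -> window k K P (projJ X K (val P.1)).
Proof.
move=> [PK _] j _; split; first exact: nbd_mem.
by rewrite /projJ PK; [exact: nbd_mem | exact: set_valP].
Qed.

(* A cluster point of the windows is the projection of some [z] in [Y].  Only
   finitely many pairs reach the coordinates of the support of [z] outside [K];
   for any other pair whose window meets the box of [z], that box meets the boxes
   of both points of the pair. *)
Lemma separated_countable k K Pf : finite_set K -> separated k K Pf -> countable Pf.
Proof.
move=> fK [Pbad Psep]; apply: contrapT => ncPf.
have cK := finite_set_countable fK.
have [|w0 w0P] := @pseudo_aleph1_compact_cluster _ _ Pf (window k K) (X_pa K cK) _ ncPf.
  move=> P PfP; split; first exact: window_open.
  by exists (projJ X K (val P.1)); exact: window_proj (Pbad P PfP).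
have [z zw0] := fill_subProd w0 cK.
pose N := box [set j : K | supp k z (val j)] (fun j => nbd k z (val j)).
have w0N : nbhs w0 N.
  rewrite -zw0; apply: nbhs_box => [|j _]; first exact/finite_preimage_val/supp_finite.
  by apply: open_nbhs_nbhs; split; [exact: nbd_open | exact: nbd_mem].
pose Bd := \bigcup_(i in supp k z `\` K) [set P | Pf P /\ pair_supp k P i].
have fBd : finite_set Bd.
  apply: bigcup_finite => [|i [_ nKi]]; first exact/finite_setD/supp_finite.
  apply: is_subset1_finite => P Q [PfP Pi] [PfQ Qi].
  by apply: contrapT => PQ; apply: nKi; exact: Psep P Q PfP PfQ PQ i (conj Pi Qi).
have /infinite_setN0 [P [[PfP [w [Pw Nw]]] nBd]] := infinite_setD (w0P N w0N) fBd.
have meet (a : Y) : supp k a `<=` pair_supp k P ->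
    (forall j : K, supp k a (val j) -> nbd k a (val j) (w j)) -> boxes_meet k z a.
  move=> sa aw i zi ai.
  have Ki : K i.
    by apply: contrapT => nKi; apply: nBd; exists i => //; split => //; exact: sa.
  pose j : K := SigSub (mem_set Ki).
  by exists (w j); split; [exact: (Nw j) | exact: (aw j)].
have zP1 : boxes_meet k z P.1.
  by apply: meet => [i|j Sj]; [left | exact: (Pw j (or_introl Sj)).1].
have zP2 : boxes_meet k z P.2.
  by apply: meet => [i|j Sj]; [right | exact: (Pw j (or_intror Sj)).2].
by have := dist_lt_common_meet zP1 zP2; rewrite ltNge (Pbad P PfP).2.
Qed.

Lemma exists_maximal_separated k K :
  exists M, separated k K M /\ forall N, M `<` N -> ~ separated k K N.
Proof.
apply: Zorn_bigcup => Fs Fs_sep Fs_chain; split.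
  by move=> P [M FsM MP]; exact: (Fs_sep M FsM).1.
move=> P Q [M FsM MP] [N FsN NQ].
have [MN|NM] := Fs_chain M N FsM FsN.
- by apply: (Fs_sep N FsN).2 => //; exact: MN.
- by apply: (Fs_sep M FsM).2 => //; exact: NM.
Qed.

Lemma separated_setU1 {k K M P} {J : set I} :
  separated k K M -> bad_pair k K P -> (forall Q, M Q -> pair_supp k Q `<=` J) ->
  pair_supp k P `&` J `<=` K -> separated k K (M `|` [set P]).
Proof.
move=> [Mbad Msep] bP MJ PJK; split => [Q [/Mbad //|-> //]|].
move=> Q1 Q2 [M1|->] [M2|->] Q12 i [i1 i2].
- exact: Msep Q1 Q2 M1 M2 Q12 i (conj i1 i2).
- by apply: PJK; split => //; exact: MJ Q1 M1 i i1.
- by apply: PJK; split => //; exact: MJ Q2 M2 i i2.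
- by case: Q12.
Qed.

Lemma pseudo_aleph1_osc k : exists J, countable J /\ osc_on J (eps k *+ 4).
Proof.
pose M K := projT1 (cid (exists_maximal_separated k K)).
have MP K : separated k K (M K) /\ forall N, M K `<` N -> ~ separated k K N.
  exact: projT2 (cid (exists_maximal_separated k K)).
pose Phi A := \bigcup_(K in [set K | K `<=` A /\ finite_set K])
  \bigcup_(P in M K) pair_supp k P.
have cPhi A : countable A -> countable (Phi A).
  move=> cA; apply: bigcup_countable => [|K [_ fK]]; first exact: countable_finite_subset.
  apply: bigcup_countable => [|P _]; first exact: separated_countable fK (MP K).1.
  exact: countableU (supp_countable k P.1) (supp_countable k P.2).
have [J [cJ _ closedJ]] := countable_closure (countable0 I) cPhi.
exists J; split => // y y' yy'; rewrite ltNge; apply/negP => bad.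
pose P := (y, y'); pose K := pair_supp k P `&` J.
have fK : finite_set K by exact/finite_setIl/pair_supp_finite.
have [A [_ KA PhiJ]] := closedJ K fK (fun i Ki => Ki.2).
have MJ Q : M K Q -> pair_supp k Q `<=` J.
  by move=> MQ i Qi; apply: PhiJ; exists K => //; exists Q.
have bP : bad_pair k K P by split => // i Ki; exact: yy' i Ki.2.
(* Either [P] is in [M K], whose supports lie in [J], or it can be added to it. *)
have [MKP|nMKP] := pselect (M K P).
  have : boxes_meet k y y'.
    apply: boxes_meet_mem => i yi y'i.
    by rewrite -yy'; [exact: nbd_mem | exact: MJ P MKP i (or_intror y'i)].
  by move/dist_lt_boxes_meet; have := eps_gt0 k; lra.
have MPsep := separated_setU1 (MP K).1 bP MJ (fun i Ki => Ki).
apply: ((MP K).2 _ _ MPsep).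
by split => [Q MQ|MPK]; [left | apply: nMKP; exact: MPK P (or_intror erefl)].
Qed.

End PseudoAleph1Compact.

End ContinuousExtension.

Theorem proposition3p5 (R : realType) (I : Type) (X : I -> topologicalType)
  (Y : set (Prod X)) :
  fills_countable_subproducts X Y ->
  (  (forall J : set I, countable J -> pseudo_aleph1_compact (subProd X J))
  \/ (forall i : I, first_countable (X i))
  \/ (forall i : I, separable (X i))) ->
  C_embedded R Y.
Proof.
move=> Y_fills hyp f f_cont.
have [Y_neq0|Y0] := pselect (Y !=set0); last first.
  exists (fun=> 0); split => [|y]; first exact: cst_continuous.
  by case: Y0; exists (val y); exact: set_valP.
exists (extension Y_fills Y_neq0 f_cont); split; last exact: extension_val.
case: hyp => [X_pa|[X_fc|X_sep]].
- have [J cJ dJ] := depends_on_bigcup (pseudo_aleph1_osc Y_fills Y_neq0 f_cont X_pa).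
  exact: continuous_extension_depends cJ dJ.
- exact: continuous_extension_first_countable.
- have [J cJ dJ] := depends_on_bigcup (separable_osc Y_fills Y_neq0 f_cont X_sep).
  exact: continuous_extension_depends cJ dJ.
Qed.
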